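(* Let $H=(V,E)$ be a hypergraph with $E\ne\emptyset$, without empty edges, such that $|e|$ is even for every $e\in E$, and let $H^T=(E,V^T)$ be its dual. Let $E'\subseteq E$. Then $(V,E')$ is a $2$-factor of $H$ if and only if $H^T$ has an Euler family whose anchor set is exactly $E'$ and which traverses every vertex $e\in E'$ of $H^T$ exactly $|e|/2$ times. Likewise, $(V,E')$ is a connected $2$-factor of $H$ if and only if $H^T$ has an Euler tour whose anchor set is exactly $E'$ and which traverses every $e\in E'$ exactly $|e|/2$ times.
   Context: A hypergraph $H=(V,E)$ consists of a finite nonempty vertex set $V$, a finite edge set $E$ disjoint from $V$, and an incidence function assigning to each edge $e\in E$ a subset of $V$ (also denoted $e$); distinct edges may have the same vertex set. The degree of a vertex is the number of edges containing it. A $2$-factor of $H$ is a hypersubgraph $(V,E')$ with $E'\subseteq E$ in which every vertex of $V$ has degree exactly $2$; it is connected if any two distinct vertices are joined by a walk in $(V,E')$. The dual of $H$ is the hypergraph $H^T=(E,V^T)$ with vertex set $E$ and edge set $V^T=\{v^T: v\in V\}$, where $v^T=\{e\in E: v\in e\}$. A walk is a sequence $W=v_0e_1v_1e_2\cdots e_kv_k$ of vertices $v_i$ and edges $e_i$ such that for each $i$, $v_{i-1}\ne v_i$ and $v_{i-1},v_i\in e_i$; the $v_i$ are its anchors. $W$ is closed if $k\ge 2$ and $v_0=v_k$; it is a strict trail if $e_1,\dots,e_k$ are pairwise distinct. For a closed walk, the number of times it traverses a vertex $x$ is the number of indices $i\in\{1,\dots,k\}$ with $v_i=x$ (so the common endpoint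 counts once). An Euler tour is a closed strict trail traversing every edge; an Euler family is a family of closed strict trails such that every edge lies in exactly one trail and no two trails have a common anchor. The anchor set of an Euler family (or tour) is the set of all anchors of its trails, and the number of times the family traverses a vertex is the sum over its trails. *)

From mathcomp Require Import all_boot.
Set Implicit Arguments. Unset Strict Implicit. Unset Printing Implicit Defensive.

(* A hypergraph is given by a vertex finType T, an edge finType F
   (disjoint by typing) and an incidence function inc : F -> {set T}. *)

Section Walks.
Variables (T F : finType) (inc : F -> {set T}).

(* A walk v0 e1 v1 ... ek vk is represented by its start v0 and the
   sequence of steps [:: (e1,v1); ...; (ek,vk)].  [is_walk_in A x s]:
   it is a walk starting at x all of whose edges lie in A. *)
Fixpoint is_walk_in (A : {set F}) (x : T) (s : seq (F * T)) : bool :=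
  match s with
  | [::] => true
  | (e, y) :: s' =>
      [&& x != y, e \in A, x \in inc e, y \in inc e & is_walk_in A y s']
  end.

Definition is_walk (x : T) (s : seq (F * T)) := is_walk_in setT x s.

Definition walk_end (x : T) (s : seq (F * T)) : T := last x (map snd s).

Definition anchors (x : T) (s : seq (F * T)) : seq T := x :: map snd s.

Definition wedges (s : seq (F * T)) : seq F := map fst s.

Definition is_closed_walk (x : T) (s : seq (F * T)) : bool :=
  [&& is_walk x s, 2 <= size s & walk_end x s == x].

Definition is_strict_trail (x : T) (s : seq (F * T)) : bool :=
  is_walk x s && uniq (wedges s).

Definition is_closed_strict_trail (x : T) (s : seq (F * T)) : bool :=
  is_closed_walk x s && uniq (wedges s).

Definition traversals (y : T) (s : seq (F * T)) : nat :=
  count (pred1 y) (map snd s).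

Definition is_euler_tour (x : T) (s : seq (F * T)) : Prop :=
  is_closed_strict_trail x s /\ forall e : F, e \in wedges s.

Definition tour_anchor_set (x : T) (s : seq (F * T)) : {set T} :=
  [set y | y \in anchors x s].

Definition is_euler_family (fam : seq (T * seq (F * T))) : Prop :=
  [/\ forall t, t \in fam -> is_closed_strict_trail t.1 t.2,
      forall e : F, count (fun t => e \in wedges t.2) fam = 1 &
      forall i j, i < size fam -> j < size fam -> i != j ->
        forall y : T,
          y \in anchors (nth (y, [::]) fam i).1 (nth (y, [::]) fam i).2 ->
          y \notin anchors (nth (y, [::]) fam j).1 (nth (y, [::]) fam j).2].

Definition family_anchor_set (fam : seq (T * seq (F * T))) : {set T} :=
  [set y | has (fun t => y \in anchors t.1 t.2) fam].

Definition family_traversals (y : T) (fam : seq (T * seq (F * T))) : nat :=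
  \sum_(t <- fam) traversals y t.2.

Definition is_two_factor (A : {set F}) : Prop :=
  forall v : T, #|[set e in A | v \in inc e]| = 2.

Definition is_connected_sub (A : {set F}) : Prop :=
  forall u v : T, u != v ->
    exists s : seq (F * T), is_walk_in A u s && (walk_end u s == v).

Definition is_connected_two_factor (A : {set F}) : Prop :=
  is_two_factor A /\ is_connected_sub A.

End Walks.

Definition dual_inc (V E : finType) (inc : E -> {set V}) : V -> {set E} :=
  fun v => [set e | v \in inc e].

(* If every vertex v of H lies in exactly two edges of E', then v^T meets E' in
   a pair, so H^T restricted to E' is a multigraph in which each e in E' has
   degree |e|, even by hypothesis.  Euler families of it are built greedily (a
   trail that has not closed up ends at a vertex it touches an odd number of
   times, so an unused dual edge lets it continue) and trails sharing an anchor
   are merged.  A closed trail touches e twice per traversal, giving the |e|/2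
   count.  Conversely, if an Euler family traverses each e in E' exactly |e|/2
   times, the steps touching e use |e| distinct dual edges, hence all v in e; so
   the edges of E' containing v are exactly the two ends of the unique step
   through v^T.  Connectedness of the 2-factor is what makes the merged family a
   single trail, and walking along a tour connects any two vertices of H. *)

From mathcomp Require Import all_boot zify.
Set Implicit Arguments. Unset Strict Implicit. Unset Printing Implicit Defensive.

Section SeqFacts.
Variable T : eqType.

Lemma pairwiseN_perm (r : rel T) (s : seq T) :
  ~~ pairwise r s -> exists x y rest, perm_eq s [:: x, y & rest] /\ ~~ r x y.
Proof.
elim: s => [|x s IH] //=; rewrite negb_and => /orP [/allPn [y ys nxy] | /IH].
  by exists x, y, (rem y s); rewrite perm_cons perm_to_rem.
case=> [u [w [rest [p nuw]]]]; exists u, w, (x :: rest); split => //.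
by rewrite perm_sym -(perm_catCA [:: x] [:: u; w]) /= perm_cons perm_sym.
Qed.

Lemma pairwise_sym_in (r : rel T) (s : seq T) : symmetric r -> pairwise r s ->
  {in s &, forall x y, x != y -> r x y}.
Proof.
move=> r_sym; elim: s => [|a s IH] //= /andP [/allP ra ps] x y.
rewrite !inE => /predU1P [-> | xs] /predU1P [-> | ys]; rewrite ?eqxx //.
- by move=> _; apply: ra.
- by rewrite r_sym => _; apply: ra.
- exact: IH.
Qed.

Lemma map_uniq_inj_in (S : eqType) (f : T -> S) (s : seq T) :
  uniq (map f s) -> {in s &, injective f}.
Proof.
elim: s => [|a s IH] //= /andP [fa u] x y.
rewrite !inE => /predU1P [-> | xs] /predU1P [-> | ys] // e.
- by rewrite e map_f in fa.
- by rewrite -e map_f in fa.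
- exact: IH.
Qed.

End SeqFacts.

(** * Walks and their steps *)

Section Walks.
Variables (T F : finType) (inc : F -> {set T}).

Fixpoint steps (x : T) (s : seq (F * T)) : seq (T * F * T) :=
  if s is (e, y) :: s' then (x, e, y) :: steps y s' else [::].

Definition step_ok (A : {set F}) (q : T * F * T) :=
  [&& q.1.1 != q.2, q.1.2 \in A, q.1.1 \in inc q.1.2 & q.2 \in inc q.1.2].

Definition step_edge (q : T * F * T) := q.1.2.

Definition touches (z : T) (q : T * F * T) := (q.1.1 == z) || (q.2 == z).

Lemma is_walk_in_steps A x s : is_walk_in inc A x s = all (step_ok A) (steps x s).
Proof. by elim: s x => [|[e y] s IH] x //=; rewrite IH /step_ok /= !andbA. Qed.

Lemma map_edge_steps x s : map step_edge (steps x s) = wedges s.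
Proof. by elim: s x => [|[e y] s IH] x //=; rewrite IH. Qed.

Lemma map_dst_steps x s : map snd (steps x s) = map snd s.
Proof. by elim: s x => [|[e y] s IH] x //=; rewrite IH. Qed.

Lemma map_src_steps x s : map (fun q => q.1.1) (steps x s) = belast x (map snd s).
Proof. by elim: s x => [|[e y] s IH] x //=; rewrite IH. Qed.

Lemma steps_anchors x s q : q \in steps x s ->
  (q.1.1 \in anchors x s) && (q.2 \in anchors x s).
Proof.
move=> qs; apply/andP; split.
  by apply: mem_belast; rewrite -(map_src_steps x); apply: map_f.
by rewrite inE -(map_dst_steps x) map_f ?orbT.
Qed.

Lemma tour_anchor_set_sub (A : {set T}) x (s : seq (F * T)) :
  (tour_anchor_set x s \subset A) = all (mem A) (anchors x s).
Proof.
apply/subsetP/allP => [sA y ys | sA y]; first by apply: sA; rewrite inE.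
by rewrite inE => /sA.
Qed.

Lemma is_walk_in_cat A x s1 s2 : is_walk_in inc A x (s1 ++ s2) =
  is_walk_in inc A x s1 && is_walk_in inc A (walk_end x s1) s2.
Proof. by elim: s1 x => [|[e y] s1 IH] x //=; rewrite IH /walk_end /= !andbA. Qed.

Lemma walk_end_cat (x : T) (s1 s2 : seq (F * T)) :
  walk_end x (s1 ++ s2) = walk_end (walk_end x s1) s2.
Proof. by rewrite /walk_end map_cat last_cat. Qed.

Lemma count_belast (p : pred T) (x : T) s :
  count p (belast x s) + p (last x s) = p x + count p s.
Proof. by rewrite -[p x + _]/(count p (x :: s)) lastI -cats1 count_cat /= addn0. Qed.

Lemma count_touches z x s : is_walk inc x s ->
  count (touches z) (steps x s) =
  count (pred1 z) (belast x (map snd s)) + count (pred1 z) (map snd s).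
Proof.
rewrite /is_walk is_walk_in_steps => ok.
rewrite -(map_src_steps x) -(map_dst_steps x) !count_map -count_predUI.
rewrite (@eq_in_count _ (predI _ _) pred0) ?count_pred0 ?addn0 //.
move=> q /(allP ok) /and4P [ne _ _ _] /=.
by apply/andP => -[/eqP q1 /eqP q2]; rewrite q1 q2 eqxx in ne.
Qed.

Lemma count_touches_closed z x s : is_closed_walk inc x s ->
  count (touches z) (steps x s) = 2 * traversals z s.
Proof.
case/and3P=> w _ /eqP e; rewrite count_touches //.
have := count_belast (pred1 z) x (map snd s); rewrite -/(walk_end x s) e addnC.
by move/addnI ->; rewrite addnn -mul2n.
Qed.

Lemma count_touches_open x s : is_walk inc x s -> walk_end x s != x ->
  odd (count (touches (walk_end x s)) (steps x s)).
Proof.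
move=> w ne; rewrite count_touches //.
have := count_belast (pred1 (walk_end x s)) x (map snd s).
rewrite -/(walk_end x s) /= eqxx eq_sym (negbTE ne) add0n => <-.
by rewrite addnA addnn oddD odd_double.
Qed.

Lemma closed_walk_size x s : is_walk inc x s -> walk_end x s = x -> s != [::] ->
  1 < size s.
Proof.
case: s => [|[e y] [|p s]] //; rewrite /is_walk /walk_end /= => /and5P [ne _ _ _ _] ey.
by rewrite ey eqxx in ne.
Qed.

Lemma closed_walk_rot x s1 s2 : is_closed_walk inc x (s1 ++ s2) ->
  is_closed_walk inc (walk_end x s1) (s2 ++ s1).
Proof.
case/and3P; rewrite /is_walk is_walk_in_cat walk_end_cat => /andP [w1 w2] sz /eqP e.
by rewrite /is_closed_walk /is_walk is_walk_in_cat e w1 w2 walk_end_cat e eqxx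
  size_cat addnC -size_cat sz.
Qed.

Lemma closed_trail_rotate x s y : is_closed_strict_trail inc x s ->
  y \in tour_anchor_set x s -> exists2 s', is_closed_strict_trail inc y s' & perm_eq s' s.
Proof.
case/andP=> c u; rewrite inE => /predU1P [-> | /mapP [p ps ->]].
  by exists s; rewrite ?perm_refl //; apply/andP.
case/splitPr: ps c u => s1 s2; rewrite -cat_rcons => c u.
have p12 : perm_eq (s2 ++ rcons s1 p) (rcons s1 p ++ s2) by rewrite perm_catC.
exists (s2 ++ rcons s1 p) => //.
have := closed_walk_rot c; rewrite /walk_end map_rcons last_rcons => c'.
by rewrite /is_closed_strict_trail c' /wedges (perm_uniq (perm_map _ p12)).
Qed.

Lemma closed_trail_cat x s1 s2 :
  is_closed_strict_trail inc x s1 -> is_closed_strict_trail inc x s2 ->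
  uniq (wedges (s1 ++ s2)) -> is_closed_strict_trail inc x (s1 ++ s2).
Proof.
rewrite /is_closed_strict_trail /is_closed_walk /is_walk.
case/andP=> /and3P [w1 sz1 /eqP e1] _ /andP [/and3P [w2 _ /eqP e2] _] u.
rewrite /is_closed_walk /is_walk is_walk_in_cat walk_end_cat.
by rewrite e1 e2 w1 w2 eqxx size_cat (leq_trans sz1 (leq_addr _ _)) u.
Qed.

Definition reachable (A : {set F}) (u v : T) :=
  exists s, is_walk_in inc A u s && (walk_end u s == v).

Lemma reachable_refl A u : reachable A u u.
Proof. by exists [::]; rewrite /= eqxx. Qed.

Lemma reachable_trans A u v w : reachable A u v -> reachable A v w -> reachable A u w.
Proof.
move=> [s1 /andP [w1 /eqP e1]] [s2 /andP [w2 /eqP e2]]; exists (s1 ++ s2).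
by rewrite is_walk_in_cat walk_end_cat e1 w1 w2 e2 eqxx.
Qed.

Lemma reachable_edge (A : {set F}) e u v :
  e \in A -> u \in inc e -> v \in inc e -> reachable A u v.
Proof.
move=> eA ue ve; have [<- | ne] := eqVneq u v; first exact: reachable_refl.
by exists [:: (e, v)]; rewrite /= ne eA ue ve /walk_end /= eqxx.
Qed.

End Walks.

Arguments step_edge {T F} q.

(** * Families of closed trails in the dual hypergraph *)

Section DualFamilies.
Variables (V E : finType) (inc : E -> {set V}) (E' : {set E}).
Notation D := (dual_inc inc).
Notation trail := (E * seq (V * E))%type.

Lemma in_dual_inc v e : (e \in D v) = (v \in inc e).
Proof. by rewrite inE. Qed.

Definition anchored (t : trail) :=
  is_closed_strict_trail D t.1 t.2 && (tour_anchor_set t.1 t.2 \subset E').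

Definition fam_edges (fam : seq trail) := flatten [seq wedges t.2 | t <- fam].

Definition fam_steps (fam : seq trail) := flatten [seq steps t.1 t.2 | t <- fam].

Definition partial_euler_family (fam : seq trail) :=
  all anchored fam && uniq (fam_edges fam).

Definition anchor_disjoint (t u : trail) :=
  [disjoint tour_anchor_set t.1 t.2 & tour_anchor_set u.1 u.2].

Definition dual_step (q : E * V * E) := [&& q.1.1 != q.2, q.1.1 \in E', q.2 \in E',
  step_edge q \in inc q.1.1 & step_edge q \in inc q.2].

Lemma fam_edges_cons t fam : fam_edges (t :: fam) = wedges t.2 ++ fam_edges fam.
Proof. by []. Qed.

Lemma walk_dual_steps x s : is_walk D x s -> tour_anchor_set x s \subset E' ->
  all dual_step (steps x s).
Proof.
rewrite /is_walk is_walk_in_steps => /allP ok /subsetP sE; apply/allP => q qs.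
have /and4P [ne _ i1 i2] := ok q qs; have /andP [a1 a2] := steps_anchors qs.
by rewrite /dual_step ne !sE ?inE // -!in_dual_inc i1 i2.
Qed.

Lemma anchored_size t : anchored t -> 1 < size (wedges t.2).
Proof. by case/andP=> /andP [/and3P [_ sz _] _] _; rewrite size_map. Qed.

Lemma map_edge_fam_steps fam : map step_edge (fam_steps fam) = fam_edges fam.
Proof. by elim: fam => [|t fam IH] //=; rewrite map_cat map_edge_steps IH. Qed.

Lemma anchored_dual_steps t : anchored t -> all dual_step (steps t.1 t.2).
Proof. by case/andP=> /andP [/and3P [w _ _] _]; apply: walk_dual_steps. Qed.

Lemma fam_steps_dual fam : all anchored fam -> all dual_step (fam_steps fam).
Proof.
elim: fam => [|t fam IH] //= /andP [ant afam].
by rewrite all_cat anchored_dual_steps // IH.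
Qed.

Lemma partial_euler_family_size fam :
  partial_euler_family fam -> size (fam_edges fam) <= #|V|.
Proof. by case/andP=> _ /card_uniqP <-; apply: max_card. Qed.

Lemma anchor_disjoint_sym : symmetric anchor_disjoint.
Proof. by move=> t u; apply: disjoint_sym. Qed.

Lemma count_touches_fam z fam : all anchored fam ->
  count (touches z) (fam_steps fam) = 2 * family_traversals z fam.
Proof.
rewrite /family_traversals; elim: fam => [|t fam IH] /=; first by rewrite big_nil.
case/andP=> /andP [/andP [c _] _] afam.
by rewrite count_cat big_cons mulnDr IH // (count_touches_closed z c).
Qed.

Lemma perm_fam_edges f1 f2 : perm_eq f1 f2 -> perm_eq (fam_edges f1) (fam_edges f2).
Proof. by move=> p; apply/perm_flatten/perm_map. Qed.

Lemma count_fam_edges fam v : all (fun t : trail => uniq (wedges t.2)) fam ->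
  count (fun t : trail => v \in wedges t.2) fam = count_mem v (fam_edges fam).
Proof.
rewrite /fam_edges; elim: fam => [|t fam IH] //= /andP [ut ufam].
by rewrite count_cat IH // (count_uniq_mem v ut).
Qed.

Lemma euler_family_of_partial fam : partial_euler_family fam ->
  (forall v, v \in fam_edges fam) -> pairwise anchor_disjoint fam ->
  is_euler_family D fam.
Proof.
case/andP=> /allP an uf cover disj; split.
- by move=> t /an /andP [].
- move=> v; rewrite count_fam_edges ?count_uniq_mem ?cover //.
  by apply/allP => t /an /andP [/andP []].
- move=> i j ilt jlt ij y.
  have /(pairwiseP (y, [::])) rij := disj.
  have dij : anchor_disjoint (nth (y, [::]) fam i) (nth (y, [::]) fam j).
    case: (ltngtP i j) ij => [lij | lji | ->] // _; first exact: rij.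
    by rewrite anchor_disjoint_sym; apply: rij.
  by move=> yi; have := disjointFr dij (x := y); rewrite !inE => /(_ yi) ->.
Qed.

Lemma euler_family_is_partial fam : is_euler_family D fam ->
  family_anchor_set fam \subset E' ->
  partial_euler_family fam /\ forall v, v \in fam_edges fam.
Proof.
case=> cl cnt _ /subsetP sE.
have ut : all (fun t : trail => uniq (wedges t.2)) fam.
  by apply/allP => t /cl /andP [].
have cv v : count_mem v (fam_edges fam) = 1 by rewrite -count_fam_edges.
have cover v : v \in fam_edges fam by rewrite -has_pred1 has_count cv.
split=> //; apply/andP; split; last by apply: count_mem_uniq => v; rewrite cv cover.
apply/allP => t tf; rewrite /anchored cl //=; apply/subsetP => y ya.
by apply: sE; rewrite inE; apply/hasP; exists t => //; move: ya; rewrite inE.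
Qed.

Lemma euler_tour_family x s : is_euler_tour D x s <-> is_euler_family D [:: (x, s)].
Proof.
split=> [[c cov] | [c cnt _]].
- split=> [t | e | [|i] [|j]] //; first by rewrite inE => /eqP ->.
  by rewrite /= cov.
- split=> [|e]; first exact: (c (x, s) (mem_head _ _)).
  by have := cnt e; rewrite /= addn0; case: (e \in wedges s).
Qed.

Lemma family_anchor_set1 x (s : seq (V * E)) :
  family_anchor_set [:: (x, s)] = tour_anchor_set x s.
Proof. by apply/setP => y; rewrite !inE /= orbF. Qed.

Lemma family_traversals1 e x (s : seq (V * E)) :
  family_traversals e [:: (x, s)] = traversals e s.
Proof. by rewrite /family_traversals big_seq1. Qed.


Lemma merge_trails t1 t2 y : anchored t1 -> anchored t2 ->
  y \in tour_anchor_set t1.1 t1.2 -> y \in tour_anchor_set t2.1 t2.2 ->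
  uniq (wedges t1.2 ++ wedges t2.2) ->
  exists2 t, anchored t & perm_eq (wedges t.2) (wedges t1.2 ++ wedges t2.2).
Proof.
case/andP=> c1 /subsetP sE1 /andP [c2 /subsetP sE2] y1 y2 u.
have [s1 c1' p1] := closed_trail_rotate c1 y1.
have [s2 c2' p2] := closed_trail_rotate c2 y2.
have pw : perm_eq (wedges (s1 ++ s2)) (wedges t1.2 ++ wedges t2.2).
  by rewrite /wedges map_cat perm_cat ?perm_map.
exists (y, s1 ++ s2) => //; rewrite /anchored closed_trail_cat ?(perm_uniq pw) //=.
apply/subsetP => z; rewrite !inE map_cat mem_cat => /or3P [/eqP -> | z1 | z2].
- exact: sE1.
- by apply: sE1; rewrite !inE -(perm_mem (perm_map snd p1)) z1 orbT.
- by apply: sE2; rewrite !inE -(perm_mem (perm_map snd p2)) z2 orbT.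
Qed.

Lemma merge_family fam : partial_euler_family fam -> exists fam',
  [/\ partial_euler_family fam', perm_eq (fam_edges fam') (fam_edges fam)
    & pairwise anchor_disjoint fam'].
Proof.
elim: {fam}(size fam).+1 {-2}fam (ltnSn (size fam)) => // n IH fam ltfn pf.
have [disj | /pairwiseN_perm [t1 [t2 [rest [pfam nd]]]]] :=
  boolP (pairwise anchor_disjoint fam); first by exists fam.
case/andP: pf => an uf.
have /= /and3P [a1 a2 arest] : all anchored [:: t1, t2 & rest].
  by rewrite -(perm_all _ pfam).
have pe := perm_fam_edges pfam; rewrite !fam_edges_cons catA in pe.
have /set0Pn [y /setIP [y1 y2]] :
    tour_anchor_set t1.1 t1.2 :&: tour_anchor_set t2.1 t2.2 != set0.
  by rewrite setI_eq0.
have u12 : uniq (wedges t1.2 ++ wedges t2.2).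
  by move: uf; rewrite (perm_uniq pe) cat_uniq => /andP [].
have [t ant pt] := merge_trails a1 a2 y1 y2 u12.
have pe' : perm_eq (fam_edges (t :: rest)) (fam_edges fam).
  by rewrite perm_sym (perm_trans pe) // fam_edges_cons perm_cat // perm_sym.
have lt : size (t :: rest) < n by move: ltfn; rewrite (perm_size pfam).
have pf : partial_euler_family (t :: rest).
  by rewrite /partial_euler_family /= ant arest (perm_uniq pe').
have [fam' [pf' pe'' disj']] := IH _ lt pf.
by exists fam'; split => //; apply: perm_trans pe'' pe'.
Qed.

Lemma touching_steps_fill_edge L e v : all dual_step L -> uniq (map step_edge L) ->
  count (touches e) L = #|inc e| -> v \in inc e ->
  exists2 q, q \in L & (step_edge q == v) && touches e q.
Proof.
move=> dL uL ce ve.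
set S := [seq step_edge q | q <- L & touches e q].
have uS : uniq S by apply: subseq_uniq uL; apply/map_subseq/filter_subseq.
have sS : {subset S <= inc e}.
  move=> w /mapP [q]; rewrite mem_filter => /andP [tq qL] ->.
  by have /and5P [_ _ _ i1 i2] := allP dL q qL; case/orP: tq => /eqP <-.
have eqS : S =i inc e.
  apply/subset_cardP; last exact/subsetP.
  by rewrite (card_uniqP uS) size_map size_filter ce.
have /mapP [q] : v \in S by rewrite eqS.
by rewrite mem_filter => /andP [tq qL] ->; exists q; rewrite ?eqxx.
Qed.

Lemma two_factor_of_covering_family fam :
  partial_euler_family fam -> (forall v, v \in fam_edges fam) ->
  (forall e, e \in E' -> 2 * family_traversals e fam = #|inc e|) -> is_two_factor inc E'.
Proof.
case/andP=> an uf cover trav v.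
set L := fam_steps fam.
have dL : all dual_step L := fam_steps_dual an.
have uL : uniq (map step_edge L) by rewrite map_edge_fam_steps.
have /mapP [q qL vq] : v \in map step_edge L by rewrite map_edge_fam_steps.
have /and5P [ne q1 q2 i1 i2] := allP dL q qL.
suff -> : [set e in E' | v \in inc e] = [set q.1.1; q.2] by rewrite cards2 ne.
apply/setP => e; rewrite !inE; apply/andP/orP => [[eE ve] | ].
  have ce : count (touches e) L = #|inc e| by rewrite count_touches_fam ?trav.
  have [q' q'L /andP [/eqP vq' te]] := touching_steps_fill_edge dL uL ce ve.
  have qq : q' = q by apply: (map_uniq_inj_in uL) => //; rewrite vq' vq.
  by rewrite -qq; apply/orP; rewrite !(eq_sym e).
by case=> /eqP ->; rewrite vq; split.
Qed.

Lemma two_factor_of_euler_family fam : (forall e, ~~ odd #|inc e|) ->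
  is_euler_family D fam -> family_anchor_set fam = E' ->
  (forall e, e \in E' -> family_traversals e fam = #|inc e| %/ 2) -> is_two_factor inc E'.
Proof.
move=> heven ef an tr.
have [pf cover] : partial_euler_family fam /\ forall v, v \in fam_edges fam.
  by apply: euler_family_is_partial; rewrite ?an.
apply: two_factor_of_covering_family pf cover _ => e eE.
by rewrite tr // mulnC divnK // dvdn2 heven.
Qed.

Lemma reachable_along_walk (A : {set E}) z u c r w :
  is_walk D z ((u, c) :: r) -> all (mem A) (map snd ((u, c) :: r)) ->
  w \in wedges ((u, c) :: r) -> reachable inc A u w.
Proof.
elim: r z u c => [|[u' c'] r IH] z u c /and5P [_ _ _ cu wr] /andP [cA aA].
  by rewrite inE => /eqP ->; apply: reachable_refl.
rewrite /wedges /= inE => /predU1P [-> | wr']; first exact: reachable_refl.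
apply: reachable_trans (IH c u' c' wr aA wr').
have /and5P [_ _ cu' _ _] := wr.
by apply: (reachable_edge cA); rewrite -in_dual_inc.
Qed.

Lemma tour_connected x s : is_euler_tour D x s -> tour_anchor_set x s \subset E' ->
  is_connected_sub inc E'.
Proof.
case=> /andP [c _] cov /subsetP sE; rewrite /is_connected_sub => u v _.
have /mapP [[u' y] ps /= uu'] := cov u; rewrite -{}uu' in ps.
case/splitPr: ps c cov sE => s1 s2 /closed_walk_rot /and3P [w _ _] cov sE.
have p : perm_eq ((u, y) :: s2 ++ s1) (s1 ++ (u, y) :: s2) by rewrite -cat_cons perm_catC.
apply: (reachable_along_walk w).
  apply/allP => z; rewrite (perm_mem (perm_map _ p)) => zs.
  by apply: sE; rewrite !inE zs orbT.
by rewrite /wedges (perm_mem (perm_map _ p)); apply: cov.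
Qed.

End DualFamilies.

Arguments anchor_disjoint {V E} t u.
Arguments anchor_disjoint_sym {V E}.

(** * Under the 2-factor hypothesis *)

Section TwoFactor.
Variables (V E : finType) (inc : E -> {set V}) (E' : {set E}).
Notation D := (dual_inc inc).
Hypothesis two_factor : is_two_factor inc E'.

Lemma two_factor_touches q z : dual_step inc E' q -> z \in E' ->
  touches z q = (step_edge q \in inc z).
Proof.
case/and5P=> ne q1 q2 i1 i2 zE; apply/idP/idP => [/orP [] /eqP <- // | iz].
move/eqP: (two_factor (step_edge q)) => /cards2P [a [b [ab eS]]].
have ab_of w : w \in E' -> step_edge q \in inc w -> (w == a) || (w == b).
  by move=> wE wi; rewrite -in_set2 -eS inE wE wi.
move: ne; rewrite /touches.
case/orP: (ab_of _ zE iz) => /eqP ->; case/orP: (ab_of _ q1 i1) => /eqP ->;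
  case/orP: (ab_of _ q2 i2) => /eqP ->; rewrite ?eqxx ?orbT //.
Qed.

Lemma other_edge z v : z \in E' -> v \in inc z ->
  exists2 w, w \in E' & (v \in inc w) && (w != z).
Proof.
move/eqP: (two_factor v) => /cards2P [a [b [ab eS]]] zE vz.
have inS w : (w \in E') && (v \in inc w) = (w \in [set a; b]) by rewrite -eS inE.
have := inS z; rewrite zE vz !inE => /esym /orP [] /eqP ->.
- move: (inS b); rewrite !inE eqxx orbT => /andP [bE vb].
  by exists b; rewrite // vb eq_sym.
- by move: (inS a); rewrite !inE eqxx => /andP [aE va]; exists a; rewrite // va.
Qed.

Lemma count_touches_card L z : all (dual_step inc E') L -> uniq (map step_edge L) ->
  z \in E' -> count (touches z) L = #|[set v in inc z | v \in map step_edge L]|.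
Proof.
move=> dL uL zE.
rewrite (eq_in_count (a2 := preim step_edge (mem (inc z)))); last first.
  by move=> q /(allP dL) /two_factor_touches ->.
rewrite -count_map -size_filter -(card_uniqP (filter_uniq _ uL)).
by apply: eq_card => v; rewrite !inE mem_filter.
Qed.

Lemma anchor_of_edge t v e : anchored inc E' t -> v \in wedges t.2 -> e \in E' ->
  v \in inc e -> e \in tour_anchor_set t.1 t.2.
Proof.
move=> ant; rewrite -(map_edge_steps t.1) => /mapP [q qs ->] eE ve.
have := two_factor_touches (allP (anchored_dual_steps ant) q qs) eE.
rewrite ve => /orP tq; have /andP [a1 a2] := steps_anchors qs.
by rewrite inE; case: tq => /eqP <-.
Qed.

Lemma family_traversals_cover fam e : partial_euler_family inc E' fam ->
  (forall v, v \in fam_edges fam) -> e \in E' -> family_traversals e fam = #|inc e| %/ 2.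
Proof.
case/andP=> an uf cover eE.
have := count_touches_card (fam_steps_dual an) _ eE.
rewrite map_edge_fam_steps (count_touches_fam _ an) => /(_ uf).
have -> : [set v in inc e | v \in fam_edges fam] = inc e.
  by apply/setP => v; rewrite inE cover andbT.
by move=> <-; rewrite mulKn.
Qed.

Lemma connected_trail_covers fam t : partial_euler_family inc E' fam ->
  (forall v, v \in fam_edges fam) -> pairwise anchor_disjoint fam ->
  is_connected_sub inc E' -> t \in fam -> forall v, v \in wedges t.2.
Proof.
case/andP=> /allP an _ cover disj conn tf.
have same_trail t' u w e : t' \in fam -> u \in wedges t.2 -> w \in wedges t'.2 ->
    e \in E' -> u \in inc e -> w \in inc e -> t' = t.
  move=> t'f ut wt' eE ue we; have [// | ne] := eqVneq t' t.
  have := pairwise_sym_in anchor_disjoint_sym disj t'f tf ne.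
  move/disjointFr/(_ (anchor_of_edge (an t' t'f) wt' eE we)).
  by rewrite (anchor_of_edge (an t tf) ut eE ue).
suff reach u w : reachable inc E' u w -> u \in wedges t.2 -> w \in wedges t.2.
  have [v0 v0t] : exists v0, v0 \in wedges t.2.
    have := anchored_size (an t tf).
    by case: (wedges t.2) => // v0 ? _; exists v0; rewrite inE eqxx.
  by move=> v; have [<- // | ne] := eqVneq v0 v; apply: reach v0t; apply: conn.
case=> s; elim: s u => [|[e y] s IH] u /=; first by move=> /eqP <-.
case/andP=> /and5P [_ eE ue ye ws] wend ut; apply: (IH y); first by rewrite ws wend.
have /flattenP [_ /mapP [t' t'f ->] yt'] := cover y.
by rewrite -(same_trail t' u y e).
Qed.

Definition fresh_walk (fam : seq (E * seq (V * E))) a s :=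
  [&& is_walk D a s, tour_anchor_set a s \subset E' & uniq (wedges s ++ fam_edges fam)].

Lemma fresh_walk_size fam a s : fresh_walk fam a s -> size s <= #|V|.
Proof.
case/and3P=> _ _ /card_uniqP; rewrite size_cat size_map => cd.
by apply: leq_trans (leq_addr (size (fam_edges fam)) _) _; rewrite -cd max_card.
Qed.

Hypothesis even_edges : forall e : E, ~~ odd #|inc e|.

(* The end [z] of an open walk is touched an odd number of times by the steps
   of the walk and of the family, which use distinct elements of [inc z]; as
   [#|inc z|] is even, one element of [inc z] is still unused. *)
Lemma fresh_walk_extend fam a s : partial_euler_family inc E' fam -> fresh_walk fam a s ->
  walk_end a s != a -> exists p, fresh_walk fam a (rcons s p).
Proof.
case/andP=> an _ /and3P [w sE u] open; set z := walk_end a s.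
have zE : z \in E' by apply: (subsetP sE); rewrite inE mem_last.
set L := steps a s ++ fam_steps fam.
have dL : all (dual_step inc E') L by rewrite all_cat walk_dual_steps // fam_steps_dual.
have uL : uniq (map step_edge L) by rewrite map_cat map_edge_steps map_edge_fam_steps.
have odd_z : odd (count (touches z) L).
  rewrite count_cat (count_touches_fam z an) oddD mul2n odd_double addbF.
  exact: (count_touches_open w open).
have [v' vz v'L] : exists2 v', v' \in inc z & v' \notin map step_edge L.
  have : ~~ (inc z \subset [set v in inc z | v \in map step_edge L]).
    apply: contraL odd_z => sub; rewrite count_touches_card //.
    have -> : [set v in inc z | v \in map step_edge L] = inc z.
      apply/eqP; rewrite eqEsubset sub andbT.
      by apply/subsetP => v; rewrite inE => /andP [].
    exact: even_edges.
  by case/subsetPn => v' vz; rewrite inE vz /= => v'L; exists v'.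
have [x xE /andP [v'x xz]] := other_edge zE vz.
exists (v', x); apply/and3P; split.
- rewrite /is_walk -cats1 is_walk_in_cat -/(is_walk D a s) w /= -/z eq_sym xz.
  by rewrite !in_dual_inc vz v'x in_setT.
- move: sE; rewrite !tour_anchor_set_sub /anchors map_rcons -rcons_cons all_rcons.
  by move=> ->; rewrite andbT.
- move: v'L; rewrite map_cat map_edge_steps map_edge_fam_steps /wedges map_rcons.
  by rewrite cat_rcons -cat1s uniq_catCA /= => ->.
Qed.

Lemma fresh_walk_close fam a s : partial_euler_family inc E' fam -> fresh_walk fam a s ->
  s != [::] -> exists s', [&& fresh_walk fam a s', walk_end a s' == a & s' != [::]].
Proof.
move=> pf; have [n] := ubnP (#|V| - size s); elim: n s => // n IH s bound fw ne.
have [back | open] := eqVneq (walk_end a s) a; first by exists s; rewrite fw back eqxx.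
have [p fw'] := fresh_walk_extend pf fw open.
apply: (IH (rcons s p)) => //; last by rewrite -size_eq0 size_rcons.
by have := fresh_walk_size fw'; rewrite size_rcons; lia.
Qed.

Lemma add_trail fam v : partial_euler_family inc E' fam -> v \notin fam_edges fam ->
  exists t, partial_euler_family inc E' (t :: fam).
Proof.
move=> pf vn; move/eqP: (two_factor v) => /cards2P [a [b [ab eS]]].
have : a \in [set e in E' | v \in inc e] by rewrite eS !inE eqxx.
have : b \in [set e in E' | v \in inc e] by rewrite eS !inE eqxx orbT.
rewrite !inE => /andP [bE vb] /andP [aE va].
have fw : fresh_walk fam a [:: (v, b)].
  rewrite /fresh_walk /is_walk /= ab !in_dual_inc va vb tour_anchor_set_sub /= aE bE vn.
  by rewrite in_setT; case/andP: pf.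
have [s /and3P [/and3P [w sE u] /eqP back ne]] := fresh_walk_close pf fw isT.
exists (a, s); case/andP: pf => an _; rewrite /partial_euler_family /= an u andbT.
rewrite /anchored /is_closed_strict_trail /is_closed_walk /= w back eqxx sE.
by rewrite (closed_walk_size w back ne); move: u; rewrite cat_uniq => /andP [-> _].
Qed.

Lemma exists_covering_family :
  exists fam, partial_euler_family inc E' fam /\ forall v, v \in fam_edges fam.
Proof.
suff grow fam : partial_euler_family inc E' fam ->
  exists fam', partial_euler_family inc E' fam' /\ forall v, v \in fam_edges fam'.
  exact: (grow [::] isT).
have [n] := ubnP (#|V| - size (fam_edges fam)); elim: n fam => // n IH fam bound pf.
have [/forallP cover | /forallPn [v vn]] := boolP [forall v, v \in fam_edges fam].
  by exists fam.
have [t pt] := add_trail pf vn; have /andP [/andP [/anchored_size ts _] _] := pt.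
have := partial_euler_family_size pt; rewrite fam_edges_cons size_cat => le.
by apply: IH pt; rewrite fam_edges_cons size_cat; lia.
Qed.

Hypothesis nonempty_edges : forall e : E, inc e != set0.

Lemma family_anchor_set_cover fam : partial_euler_family inc E' fam ->
  (forall v, v \in fam_edges fam) -> family_anchor_set fam = E'.
Proof.
case/andP => /allP an _ cover; apply/setP => e; rewrite inE.
apply/hasP/idP => [[t tf ea] | eE].
  by have /andP [_ /subsetP] := an t tf; apply; rewrite inE.
have [v ve] := set0Pn _ (nonempty_edges e).
have /flattenP [_ /mapP [t tf ->] vt] := cover v.
by exists t => //; have := anchor_of_edge (an t tf) vt eE ve; rewrite inE.
Qed.

Lemma euler_family_of_cover fam : partial_euler_family inc E' fam ->
  (forall v, v \in fam_edges fam) -> pairwise anchor_disjoint fam ->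
  [/\ is_euler_family D fam, family_anchor_set fam = E' &
      forall e, e \in E' -> family_traversals e fam = #|inc e| %/ 2].
Proof.
move=> pf cover disj; split; first exact: (euler_family_of_partial pf cover disj).
  exact: (family_anchor_set_cover pf cover).
by move=> e; apply: (family_traversals_cover pf cover).
Qed.

Lemma exists_disjoint_cover : exists fam,
  [/\ partial_euler_family inc E' fam, forall v, v \in fam_edges fam
    & pairwise anchor_disjoint fam].
Proof.
have [fam [pf cover]] := exists_covering_family.
have [fam' [pf' pe disj]] := merge_family pf.
by exists fam'; split => // v; rewrite (perm_mem pe).
Qed.

Lemma exists_covering_trail : 0 < #|V| -> is_connected_sub inc E' ->
  exists t, partial_euler_family inc E' [:: t] /\ forall v, v \in fam_edges [:: t].
Proof.
move=> /card_gt0P [v0 _] conn; have [fam [pf cover disj]] := exists_disjoint_cover.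
have /flattenP [_ /mapP [t tf ->] _] := cover v0.
have cover_t := connected_trail_covers pf cover disj conn tf.
exists t; rewrite fam_edges_cons cats0; split=> //.
case/andP: pf => /allP /(_ t tf) ant _.
by rewrite /partial_euler_family /= ant fam_edges_cons cats0; case/andP: ant => /andP [].
Qed.

End TwoFactor.

Theorem theorem2p44 (V E : finType) (inc : E -> {set V})
    (hV : 0 < #|V|) (hE : 0 < #|E|)
    (hnonempty : forall e : E, inc e != set0)
    (heven : forall e : E, ~~ odd #|inc e|)
    (E' : {set E}) :
  (is_two_factor inc E' <->
     exists fam : seq (E * seq (V * E)),
       [/\ is_euler_family (dual_inc inc) fam,
           family_anchor_set fam = E' &
           forall e, e \in E' -> family_traversals e fam = #|inc e| %/ 2])
  /\
  (is_connected_two_factor inc E' <->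
     exists (x : E) (s : seq (V * E)),
       [/\ is_euler_tour (dual_inc inc) x s,
           tour_anchor_set x s = E' &
           forall e, e \in E' -> traversals e s = #|inc e| %/ 2]).
Proof.
split; split.
- move=> h2; have [fam [pf cover disj]] := exists_disjoint_cover h2 heven.
  by exists fam; apply: euler_family_of_cover.
- by case=> fam [ef an tr]; apply: two_factor_of_euler_family ef an tr.
- case=> h2 conn; have [[x s] [pf cover]] := exists_covering_trail h2 heven hV conn.
  have [/euler_tour_family tour] := euler_family_of_cover h2 hnonempty pf cover isT.
  rewrite family_anchor_set1 => an tr; exists x, s; split => // e eE.
  by rewrite -(family_traversals1 e x) tr.
- case=> x [s [tour an tr]]; split; last by apply: tour_connected tour _; rewrite an.
  apply: (two_factor_of_euler_family heven (proj1 (euler_tour_family _ _ _) tour)).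
    by rewrite family_anchor_set1.
  by move=> e eE; rewrite family_traversals1 tr.
Qed.
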